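(* For every integer $k\ge 1$, every vertex of every graph $G$ with $\mathrm{adim}(G)=k$ has degree at most $k+2^k-1$. Moreover, there exists a graph $G$ with $\mathrm{adim}(G)=k$ having a vertex of degree exactly $k+2^k-1$.
   Context: $d(x,y)$ is the length of a shortest $x$–$y$ path, with $d(x,y)=\infty$ if $x,y$ lie in different components. Let $d_1(x,y)=\min\{d(x,y),2\}$. A set $A\subseteq V(G)$ is an adjacency resolving set if for all distinct $x,y\in V(G)$ there is $z\in A$ with $d_1(x,z)\ne d_1(y,z)$. The adjacency dimension $\mathrm{adim}(G)$ is the minimum size of an adjacency resolving set. *)

From mathcomp Require Import all_boot all_order.
Set Implicit Arguments. Unset Strict Implicit. Unset Printing Implicit Defensive.

Definition simple_graph (T : finType) (e : rel T) : Prop :=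
  symmetric e /\ irreflexive e.

(* d_1(x,y) = min{d(x,y), 2}: 0 if x = y, 1 if x,y adjacent, 2 otherwise
   (including different components, where d = infinity). *)
Definition adist (T : finType) (e : rel T) (x y : T) : nat :=
  if x == y then 0 else if e x y then 1 else 2.

Definition adj_resolving (T : finType) (e : rel T) (A : {set T}) : bool :=
  [forall x : T, forall y : T,
     (x != y) ==> [exists z in A, adist e x z != adist e y z]].

(* adim(G): minimum size of an adjacency resolving set (V(G) itself always
   resolves, so #|T| is a valid default). *)
Definition adim (T : finType) (e : rel T) : nat :=
  \big[minn/#|T|]_(A : {set T} | adj_resolving e A) #|A|.

Definition degree (T : finType) (e : rel T) (x : T) : nat :=
  #|[set y | e x y]|.

From mathcomp Require Import all_boot all_order.
From mathcomp Require Import zify.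

Set Implicit Arguments. Unset Strict Implicit. Unset Printing Implicit Defensive.

(* If A is an adjacency resolving set, two vertices outside A
   are distinguished by some z in A, which is then adjacent to exactly one of
   them; so the trace map u |-> N(u) :&: A is injective on V \ A and
   |V| <= |A| + 2^|A|.  Taking A of minimum size gives |V| <= k + 2^k, and a
   vertex is never its own neighbour, so every degree is at most |V| - 1.

   On the vertices 'I_k + {set 'I_k} join a landmark i to every
   subset vertex X with i \in X, and join the full-set vertex to all other
   subset vertices.  The landmarks form a resolving set of size k, while the
   order bound |V| <= adim + 2^adim together with the monotonicity of
   n |-> n + 2^n forces adim >= k; the full-set vertex has degree |V| - 1. *)

Lemma adist_self (T : finType) (e : rel T) (x : T) : adist e x x = 0.
Proof. by rewrite /adist eqxx. Qed.

Lemma adist_neq (T : finType) (e : rel T) (x y : T) : x != y ->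
  adist e x y = if e x y then 1 else 2.
Proof. by rewrite /adist => /negbTE ->. Qed.

Definition trace (T : finType) (e : rel T) (A : {set T}) (u : T) : {set T} :=
  [set z in A | e u z].

Lemma trace_sub (T : finType) (e : rel T) (A : {set T}) (u : T) :
  trace e A u \subset A.
Proof. by apply/subsetP => z; rewrite inE => /andP []. Qed.

Lemma trace_inj (T : finType) (e : rel T) (A : {set T}) :
  adj_resolving e A -> {in ~: A &, injective (trace e A)}.
Proof.
move=> resA u v uA vA same_trace; apply/eqP/negPn/negP => uv.
have /exists_inP [z zA] := implyP (forallP (forallP resA u) v) uv.
have uz : u != z by apply: contraTneq uA => ->; rewrite inE zA.
have vz : v != z by apply: contraTneq vA => ->; rewrite inE zA.
have : (z \in trace e A u) = (z \in trace e A v) by rewrite same_trace.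
by rewrite !adist_neq // !inE zA /= => ->; rewrite eqxx.
Qed.

Lemma card_le_resolving (T : finType) (e : rel T) (A : {set T}) :
  adj_resolving e A -> #|T| <= #|A| + 2 ^ #|A|.
Proof.
move=> resA; rewrite -(cardsC A) leq_add2l -card_powerset.
rewrite -(card_in_imset (trace_inj resA)); apply: subset_leq_card.
by apply/subsetP => _ /imsetP [u _ ->]; rewrite powersetE trace_sub.
Qed.

(* The whole vertex set resolves, since x is the only vertex at distance 0. *)
Lemma setT_resolving (T : finType) (e : rel T) : adj_resolving e setT.
Proof.
apply/forallP => x; apply/forallP => y; apply/implyP => xy.
apply/exists_inP; exists x; first by rewrite inE.
by rewrite adist_self adist_neq 1?eq_sym //; case: (e y x).
Qed.

Lemma adim_attained (T : finType) (e : rel T) :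
  exists2 A : {set T}, adj_resolving e A & #|A| = adim e.
Proof.
rewrite /adim; apply: (big_ind (fun m => exists2 A, adj_resolving e A & #|A| = m)).
- by exists setT; rewrite ?setT_resolving ?cardsT.
- by move=> m n [A resA <-] [B resB <-]; rewrite /minn; case: ifP => _;
    [exists A | exists B].
- by move=> A resA; exists A.
Qed.

Lemma adim_le (T : finType) (e : rel T) (A : {set T}) :
  adj_resolving e A -> adim e <= #|A|.
Proof.
move=> resA; rewrite /adim unlock /reducebig.
elim: (index_enum _) (mem_index_enum A) => [//|B s IH] /=.
rewrite inE => /predU1P [<-|As]; first by rewrite resA geq_minl.
by case: ifP => _; rewrite ?geq_min IH ?orbT.
Qed.

Lemma card_le_adim (T : finType) (e : rel T) : #|T| <= adim e + 2 ^ adim e.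
Proof. by have [A resA <-] := adim_attained e; apply: (card_le_resolving resA). Qed.

(* n |-> n + 2^n is strictly increasing, so it reflects <=. *)
Lemma add_exp2_monotone (m n : nat) : m + 2 ^ m <= n + 2 ^ n -> m <= n.
Proof.
apply: contraTT; rewrite -!ltnNge => lt_nm.
by rewrite -addSn leq_add // ltnW // ltn_exp2l.
Qed.

Lemma degree_lt_card (T : finType) (e : rel T) (x : T) :
  irreflexive e -> degree e x < #|T|.
Proof.
move=> irr; rewrite /degree -cardsT; apply: proper_card.
by apply/properP; split; [apply: subsetT | exists x; rewrite !inE ?irr].
Qed.

Lemma degree_le_adim (T : finType) (e : rel T) (x : T) :
  irreflexive e -> degree e x <= adim e + 2 ^ adim e - 1.
Proof.
move=> irr; have := degree_lt_card x irr; have := card_le_adim e; lia.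
Qed.

Section SharpExample.
Variable k : nat.

Local Notation V := ('I_k + {set 'I_k})%type.

Definition sharp_edge (u v : V) : bool :=
  match u, v with
  | inl _, inl _ => false
  | inl i, inr X | inr X, inl i => i \in X
  | inr X, inr Y => (X != Y) && ((X == setT) || (Y == setT))
  end.

Lemma sharp_simple : simple_graph sharp_edge.
Proof.
split; last by case=> [i|X] //=; rewrite eqxx.
case=> [i|X] [j|Y] //=.
by rewrite eq_sym orbC.
Qed.

Lemma card_sharp : #|{: V}| = k + 2 ^ k.
Proof.
rewrite card_sum card_ord; congr (_ + _).
have <- : #|powerset [set: 'I_k]| = 2 ^ k by rewrite card_powerset cardsT card_ord.
by apply: eq_card => X; rewrite powersetE subsetT.
Qed.

Definition landmarks : {set V} := inl @: [set: 'I_k].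

Lemma card_landmarks : #|landmarks| = k.
Proof. by rewrite card_imset ?cardsT ?card_ord //; apply: inl_inj. Qed.

(* A landmark is resolved by itself, and two distinct subset vertices by a
   landmark lying in exactly one of them. *)
Lemma landmarks_resolving : adj_resolving sharp_edge landmarks.
Proof.
have landmark i : inl i \in landmarks by apply: imset_f; rewrite inE.
apply/forallP => x; apply/forallP => y; apply/implyP => xy.
case: x xy => [i|X] xy.
  apply/exists_inP; exists (inl i); first exact: landmark.
  by rewrite adist_self adist_neq 1?eq_sym //; case: sharp_edge.
case: y xy => [j|Y] xy.
  apply/exists_inP; exists (inl j); first exact: landmark.
  by rewrite adist_self adist_neq //; case: sharp_edge.
have [i Xi_Yi] : exists i, (i \in X) != (i \in Y).
  apply/existsP; apply: contraNT xy => /existsPn same.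
  by apply/eqP; congr inr; apply/setP => i; apply/eqP/negPn/same.
apply/exists_inP; exists (inl i); first exact: landmark.
by rewrite !adist_neq //=; move: Xi_Yi; do 2 case: (i \in _).
Qed.

Lemma sharp_adim : adim sharp_edge = k.
Proof.
apply/eqP; rewrite eqn_leq; apply/andP; split.
  by rewrite -[leqRHS]card_landmarks adim_le ?landmarks_resolving.
by apply: add_exp2_monotone; rewrite -card_sharp card_le_adim.
Qed.

(* The full-set vertex is adjacent to every other vertex. *)
Lemma sharp_degree : degree sharp_edge (inr setT) = k + 2 ^ k - 1.
Proof.
rewrite /degree -card_sharp subn1 -(cardsC1 (inr setT : V)).
apply: eq_card => -[i|X]; rewrite !inE /= ?in_setT // eqxx orTb andbT.
by rewrite (inj_eq inr_inj) eq_sym.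
Qed.
End SharpExample.

Theorem corollary3p6 (k : nat) : 1 <= k ->
  (forall (T : finType) (e : rel T), simple_graph e -> adim e = k ->
     forall x : T, degree e x <= k + 2 ^ k - 1)
  /\
  (exists (T : finType) (e : rel T), simple_graph e /\ adim e = k /\
     exists x : T, degree e x = k + 2 ^ k - 1).
Proof.
move=> _; split.
  by move=> T e [_ irr] <- x; apply: degree_le_adim.
exists ('I_k + {set 'I_k})%type, (@sharp_edge k).
split; first exact: sharp_simple.
split; first exact: sharp_adim.
by exists (inr setT); apply: sharp_degree.
Qed.
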